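(* Suppose $\phi_1,\phi_2$ satisfy the Doubrov–Ferapontov modified heavenly hierarchy $(\Phi_1\wedge\Phi_2)_-=0$. Define the vector fields $$T_n=\partial_{t_n}-\begin{vmatrix}\phi_{1,t_n}&\phi_{2,t_n}\\ \phi_{1,y}&\phi_{2,y}\end{vmatrix}_+\partial_x-\begin{vmatrix}\phi_{2,t_n}&\phi_{1,t_n}\\ \phi_{2,x}&\phi_{1,x}\end{vmatrix}_+\partial_y,\qquad Z_j=\lambda\partial_{z_j}-\begin{vmatrix}\lambda\phi_{1,z_j}&\lambda\phi_{2,z_j}\\ \phi_{1,y}&\phi_{2,y}\end{vmatrix}_+\partial_x-\begin{vmatrix}\lambda\phi_{2,z_j}&\lambda\phi_{1,z_j}\\ \phi_{2,x}&\phi_{1,x}\end{vmatrix}_+\partial_y$$ for $n,j\ge1$. Then $T_n\vec\phi=Z_j\vec\phi=0$ for all $n,j$, and the vector fields pairwise commute: $[T_n,T_s]=0$, $[T_n,Z_j]=0$, $[Z_i,Z_j]=0$ for all $n,s,i,j\ge1$.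
   Context: Independent variables are $x,y$ and two infinite families $t_1,t_2,\dots$ and $z_1,z_2,\dots$; write $t:=t_1$, $z:=z_1$. $\lambda$ is a formal spectral parameter. For a formal Laurent series $\sum_n a_n\lambda^n$, set $(\sum_n a_n\lambda^n)_+=\sum_{n\ge0}a_n\lambda^n$ and $(\sum_n a_n\lambda^n)_-=\sum_{n<0}a_n\lambda^n$; for a determinant, $|\cdot|_+$ denotes the $(\cdot)_+$ part of the determinant. Consider formal series $\phi_1=-y+\sum_{j\ge2}z_j\lambda^{j-1}+\sum_{k\ge1}g_k\lambda^{-k}$, $\phi_2=x+t_1\lambda+\sum_{n\ge2}t_n\lambda^n+\sum_{m\ge1}f_m\lambda^{-m}$, where $g_k,f_m$ are functions of $(x,y,t_1,t_2,\dots,z_1,z_2,\dots)$, and $\vec\phi=(\phi_1,\phi_2)^T$. Define the 1-forms $\Phi_i=\phi_{i,x}dx+\phi_{i,y}dy+\sum_{n\ge1}\phi_{i,t_n}dt_n+\lambda\sum_{j\ge1}\phi_{i,z_j}dz_j$ ($i=1,2$). The Doubrov–Ferapontov modified heavenly hierarchy is $(\Phi_1\wedge\Phi_2)_-=0$, meaning that the negative-power part (in $\lambda$) of the coefficient of every basis 2-form vanishes; explicitly, for variables $a,b$ among $x,y,t_n,z_j$, the coefficient of $da\wedge db$ is $\lambda^{\epsilon}\,\partial(\phi_1,\phi_2)/\partial(a,b)$, where $\partial(\phi_1,\phi_2)/\partial(a,b)=\phi_{1,a}\phi_{2,b}-\phi_{1,b}\phi_{2,a}$ and $\epsilon$ is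 the number of $z$-variables among $a,b$. Subscripts denote partial derivatives. *)

(* Formal Laurent series in the spectral parameter lambda with
   coefficients in a commutative differential ring A (commuting derivations
   indexed by the coordinates x, y, t_n, z_j). *)
From HB Require Import structures.
From mathcomp Require Import all_boot all_order all_algebra.
From Stdlib Require Import ClassicalEpsilon.
Set Implicit Arguments. Unset Strict Implicit. Unset Printing Implicit Defensive.
Import Order.TTheory GRing.Theory Num.Theory.
Local Open Scope ring_scope.

(* coordinates: x, y, t_n (ct n), z_j (cz j); only n, j >= 1 are used *)
Inductive hcoord := cx | cy | ct of nat | cz of nat.

Definition coord_eqb (a b : hcoord) : bool :=
  match a, b with
  | cx, cx => true | cy, cy => true
  | ct n, ct m => (n == m)%N | cz n, cz m => (n == m)%N
  | _, _ => false end.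

Definition valid_coord (c : hcoord) : bool :=
  match c with ct n => (0 < n)%N | cz n => (0 < n)%N | _ => true end.

Definition nz (c : hcoord) : nat := match c with cz _ => 1%N | _ => 0%N end.

Definition coordval (A : Type) (X Y : A) (T Z : nat -> A) (c : hcoord) : A :=
  match c with cx => X | cy => Y | ct n => T n | cz n => Z n end.

Definition coord_diff_ring (A : comPzRingType) (D : hcoord -> A -> A)
    (X Y : A) (T Z : nat -> A) : Prop :=
  [/\ (forall c a b, D c (a + b) = D c a + D c b),
      (forall c a b, D c (a * b) = D c a * b + a * D c b),
      (forall c c' a, D c (D c' a) = D c' (D c a)) &
      (forall c c', D c (coordval X Y T Z c') = if coord_eqb c c' then 1 else 0)].

(* formal (bi-infinite) series in lambda: coefficient of lambda^n *)
Definition ser (A : Type) := int -> A.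

Definition bounded_above (A : comPzRingType) (s : ser A) : Prop :=
  exists N : int, forall n : int, N < n -> s n = 0.

Definition sbound (A : comPzRingType) (s : ser A) : int :=
  epsilon (inhabits 0) (fun N : int => forall n : int, N < n -> s n = 0).

(* product of Laurent series in lambda^{-1} (finite sums) *)
Definition smul (A : comPzRingType) (a b : ser A) : ser A := fun n =>
  let N := sbound a in let M := sbound b in
  if n <= N + M then
    \sum_(i < absz (N + M - n + 1)) a (n - M + i%:Z) * b (M - i%:Z)
  else 0.

Definition sadd (A : comPzRingType) (a b : ser A) : ser A := fun n => a n + b n.
Definition ssub (A : comPzRingType) (a b : ser A) : ser A := fun n => a n - b n.
(* multiplication by lambda^e *)
Definition sshift (A : comPzRingType) (e : nat) (a : ser A) : ser A :=
  fun n => a (n - e%:Z).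
Definition spos (A : comPzRingType) (a : ser A) : ser A :=
  fun n => if 0 <= n then a n else 0.
Definition sneg (A : comPzRingType) (a : ser A) : ser A :=
  fun n => if n < 0 then a n else 0.
Definition sD (A : comPzRingType) (D : hcoord -> A -> A) (c : hcoord) (s : ser A) : ser A :=
  fun n => D c (s n).

Definition det2 (A : comPzRingType) (a b c d : ser A) : ser A :=
  ssub (smul a d) (smul b c).

(* phi_1 = -y + sum_{j>=2} z_j lambda^{j-1} + sum_{k>=1} g_k lambda^{-k} *)
Definition phi1 (A : comPzRingType) (Y : A) (Z : nat -> A) (g : nat -> A) : ser A :=
  fun n => if n == 0 then - Y else if 0 < n then Z (absz n).+1 else g (absz n).
(* phi_2 = x + sum_{n>=1} t_n lambda^n + sum_{m>=1} f_m lambda^{-m} *)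
Definition phi2 (A : comPzRingType) (X : A) (T : nat -> A) (f : nat -> A) : ser A :=
  fun n => if n == 0 then X else if 0 < n then T (absz n) else f (absz n).

Definition jac (A : comPzRingType) (D : hcoord -> A -> A) (p1 p2 : ser A) (a b : hcoord) : ser A :=
  det2 (sD D a p1) (sD D b p1) (sD D a p2) (sD D b p2).

Definition DF_hierarchy (A : comPzRingType) (D : hcoord -> A -> A) (p1 p2 : ser A) : Prop :=
  forall a b : hcoord, valid_coord a -> valid_coord b ->
    forall n : int, sneg (sshift (nz a + nz b) (jac D p1 p2 a b)) n = 0.

Definition lamD (A : comPzRingType) (D : hcoord -> A -> A) (c : hcoord) (s : ser A) : ser A :=
  sshift (nz c) (sD D c s).

Definition VF (A : comPzRingType) (D : hcoord -> A -> A) (p1 p2 : ser A) (c : hcoord)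
    (s : ser A) : ser A :=
  ssub (ssub (lamD D c s)
    (smul (spos (det2 (lamD D c p1) (lamD D c p2) (sD D cy p1) (sD D cy p2))) (sD D cx s)))
    (smul (spos (det2 (lamD D c p2) (lamD D c p1) (sD D cx p2) (sD D cx p1))) (sD D cy s)).

Definition Tvf (A : comPzRingType) D (p1 p2 : ser A) (n : nat) := VF D p1 p2 (ct n).
Definition Zvf (A : comPzRingType) D (p1 p2 : ser A) (j : nat) := VF D p1 p2 (cz j).

Definition vf_commute (A : comPzRingType) (V W : ser A -> ser A) : Prop :=
  forall u : ser A, bounded_above u -> forall n : int, V (W u) n = W (V u) n.

(* Work in the commutative ring of Laurent series in lambda with support
   bounded above, with coefficientwise derivations d_c.  Put e_i(c) = d_c phi_i
   and J(a, b) = e_1(a) e_2(b) - e_1(b) e_2(a), so the hierarchy says that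
   lambda^eps J(a, b) has no negative part.  For (a, b) = (x, y) this forces
   J(x, y) = 1, and for (c, y) and (x, c) it shows that the truncated
   determinants in T_n, Z_j are exactly lambda^eps J(c, y) and lambda^eps J(x, c).
   So every field is lambda^eps (d_c - J(c, y) d_x - J(x, c) d_y), which kills
   phi_1 and phi_2 by a ring identity.  Since lambda^eps is constant, the
   commutator of two such fields is P d_x + Q d_y; it also kills phi_1 and
   phi_2, and J(x, y) = 1 then forces P = Q = 0. *)

From HB Require Import structures.
From mathcomp Require Import all_boot all_order all_algebra zify ring.
From mathcomp Require Import boolp.
From Stdlib Require Import ClassicalEpsilon.
Set Implicit Arguments.
Unset Strict Implicit.
Unset Printing Implicit Defensive.
Import Order.TTheory GRing.Theory Num.Theory.
Local Open Scope ring_scope.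

Section SeriesProduct.
Variable A : comPzRingType.
Implicit Types (a b c s : ser A) (F : int -> A).

Definition supp_le s (N : int) := forall p, N < p -> s p = 0.

Lemma supp_le_mono s N N' : N <= N' -> supp_le s N -> supp_le s N'.
Proof. by move=> hN hs p hp; apply: hs; lia. Qed.

Lemma supp_le_bounded s N : supp_le s N -> bounded_above s.
Proof. by exists N. Qed.

Definition window_sum F (lo : int) (k : nat) := \sum_(i < k) F (lo + i%:Z).

Lemma window_sum_widen F (lo : int) (k : nat) (lo' : int) (k' : nat) :
  lo' <= lo -> lo + k%:Z <= lo' + k'%:Z ->
  (forall p, p < lo -> F p = 0) -> (forall p, lo + k%:Z <= p -> F p = 0) ->
  window_sum F lo' k' = window_sum F lo k.
Proof.
move=> hlo hhi zlo zhi.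
pose j := absz (lo - lo'); pose r := absz (lo' + k'%:Z - lo - k%:Z)%R.
have -> : k' = (j + (k + r))%N by rewrite /j /r; lia.
rewrite /window_sum big_split_ord /= big1 ?add0r; last first.
  by move=> i _; apply: zlo; have := ltn_ord i; rewrite /j; lia.
rewrite big_split_ord /= [X in _ + X]big1 ?addr0; last first.
  by move=> i _; apply: zhi; rewrite /j; lia.
by apply: eq_bigr => i _; congr F; rewrite /j; lia.
Qed.

Lemma window_sum_eq F (lo : int) (k : nat) (lo' : int) (k' : nat) :
  (forall p, p < lo -> F p = 0) -> (forall p, lo + k%:Z <= p -> F p = 0) ->
  (forall p, p < lo' -> F p = 0) -> (forall p, lo' + k'%:Z <= p -> F p = 0) ->
  window_sum F lo k = window_sum F lo' k'.
Proof.
move=> z1 z2 z3 z4; pose m := lo - `|lo - lo'|%N%:Z.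
pose K := (absz (lo - m) + k + absz (lo' - m) + k')%N.
by rewrite -(@window_sum_widen F lo k m K) ?(@window_sum_widen F lo' k' m K) //;
  rewrite /m /K; lia.
Qed.

Lemma sbound_supp_le s : bounded_above s -> supp_le s (sbound s).
Proof. exact: epsilon_spec. Qed.

(* [smul] is defined through the bounds chosen by [sbound]; any window covering
   the support of the convolution gives the same coefficient. *)
Lemma smul_window a b N M n (lo : int) (k : nat) :
  supp_le a N -> supp_le b M -> lo <= n - M -> N < lo + k%:Z ->
  smul a b n = window_sum (fun p => a p * b (n - p)) lo k.
Proof.
move=> ha hb hlo hhi.
have ha' := sbound_supp_le (supp_le_bounded ha).
have hb' := sbound_supp_le (supp_le_bounded hb).
set N' := sbound a in ha'; set M' := sbound b in hb'.
have zlo p : p < lo -> a p * b (n - p) = 0 by move=> hp; rewrite hb ?mulr0 //; lia.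
have zhi p : lo + k%:Z <= p -> a p * b (n - p) = 0 by move=> hp; rewrite ha ?mul0r //; lia.
rewrite /smul -/N' -/M'; case: ifP => hn.
  transitivity (window_sum (fun p => a p * b (n - p)) (n - M') `|(N' + M' - n + 1)%R|%N).
    by apply: eq_bigr => i _; congr (_ * b _); lia.
  apply: window_sum_eq => // p hp; first by rewrite hb' ?mulr0 //; lia.
  by rewrite ha' ?mul0r //; lia.
rewrite /window_sum big1 // => i _.
case: (lerP (lo + i%:Z) N') => hi; last by rewrite ha' ?mul0r.
by rewrite hb' ?mulr0 //; lia.
Qed.

Lemma smul_supp_le a b N M : supp_le a N -> supp_le b M -> supp_le (smul a b) (N + M).
Proof.
move=> ha hb n hn.
rewrite (@smul_window a b N M n (n - M) 0) //; last by lia.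
by rewrite /window_sum big_ord0.
Qed.

Lemma smul_bounded a b : bounded_above (smul a b).
Proof.
exists (sbound a + sbound b) => n hn.
by rewrite /smul ifF //; apply/negbTE; rewrite -ltNge.
Qed.

Lemma smulC a b N M : supp_le a N -> supp_le b M -> forall n, smul a b n = smul b a n.
Proof.
move=> ha hb n; set k := (`|(N + M - n)%R|%N).+1.
rewrite (@smul_window a b N M n (n - M) k) //; try lia.
rewrite (@smul_window b a M N n (M + 1 - k%:Z) k) //; try lia.
rewrite /window_sum (reindex_inj rev_ord_inj); apply: eq_bigr => i _ /=.
by rewrite mulrC; congr (b _ * a _); have := ltn_ord i; lia.
Qed.

Lemma smulDl a b c N M : supp_le a N -> supp_le b N -> supp_le c M ->
  forall n, smul (sadd a b) c n = smul a c n + smul b c n.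
Proof.
move=> ha hb hc n; set k := (`|(N + M - n)%R|%N).+1.
have hab : supp_le (sadd a b) N by move=> p hp; rewrite /sadd ha ?hb ?addr0.
rewrite (@smul_window _ c N M n (n - M) k) //; try lia.
rewrite (@smul_window a c N M n (n - M) k) //; try lia.
rewrite (@smul_window b c N M n (n - M) k) //; try lia.
by rewrite /window_sum -big_split; apply: eq_bigr => i _; rewrite /sadd mulrDl.
Qed.

Lemma smulA a b c N : supp_le a N -> supp_le b N -> supp_le c N ->
  forall n, smul (smul a b) c n = smul a (smul b c) n.
Proof.
move=> ha0 hb0 hc0 n; set B := `|N|%N%:Z.
have toB s : supp_le s N -> supp_le s B by apply: supp_le_mono; rewrite /B; lia.
have ha := toB _ ha0; have hb := toB _ hb0; have hc := toB _ hc0.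
have hB : 0 <= B by rewrite /B; lia.
set K := (`|(4 * B - n)%R|%N).+1.
have hab := smul_supp_le ha hb; have hbc := smul_supp_le hb hc.
rewrite (@smul_window _ c (B + B) B n (n - 2 * B) K) //; try lia.
rewrite (@smul_window a _ B (B + B) n (n - 3 * B) K) //; try lia.
rewrite /window_sum.
transitivity (\sum_(i < K) \sum_(j < K)
   a (n - 3 * B + j%:Z) * (b (B + i%:Z - j%:Z) * c (2 * B - i%:Z))).
  apply: eq_bigr => i _.
  rewrite (@smul_window a b B B _ (n - 3 * B) K) //; try lia.
  rewrite /window_sum mulr_suml; apply: eq_bigr => j _; rewrite -mulrA.
  by congr (_ * (b _ * c _)); lia.
rewrite exchange_big /=; apply: eq_bigr => j _.
rewrite (@smul_window b c B B _ (B - j%:Z) K) //; try (have := ltn_ord j; lia).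
rewrite /window_sum mulr_sumr; apply: eq_bigr => i _.
by congr (_ * (b _ * c _)); lia.
Qed.

Lemma smul_top a b N M : supp_le a N -> supp_le b M -> smul a b (N + M) = a N * b M.
Proof.
move=> ha hb; rewrite (smul_window (n := N + M) (lo := N) (k := 1) ha hb); try lia.
by rewrite /window_sum big_ord1 addr0 addrC addKr.
Qed.

Lemma spos_id s : (forall n, n < 0 -> s n = 0) -> spos s = s.
Proof.
move=> s_neg; apply: funext => n; rewrite /spos.
by case: lerP => // /s_neg.
Qed.

Definition delta (m : int) : ser A := fun n => if n == m then 1 else 0.

Lemma delta_supp_le m : supp_le (delta m) m.
Proof. by move=> p hp; rewrite /delta ifF //; apply/eqP; lia. Qed.

Lemma smul_delta a N m : supp_le a N -> forall n, smul a (delta m) n = a (n - m).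
Proof.
move=> ha n.
rewrite (@smul_window a _ N m n (n - m) (`|(N - n + m)%R|%N).+1) //;
  try lia; last exact: delta_supp_le.
rewrite /window_sum big_ord_recl /= big1 ?addr0.
  by rewrite /delta ifT ?mulr1 ?addr0; [congr a; lia | apply/eqP; lia].
by move=> i _; rewrite /delta ifF ?mulr0 //; apply/eqP; rewrite /bump /=; lia.
Qed.

End SeriesProduct.
Arguments delta {A}.

Record bser (A : comPzRingType) := BSer { bval : ser A; bval_bounded : bounded_above bval }.
Arguments BSer {A}.

Section BoundedSeriesRing.
Variable A : comPzRingType.
Local Notation R := (bser A).

Lemma bser_eq (x y : R) : (forall n, bval x n = bval y n) -> x = y.
Proof.
case: x => x hx; case: y => y hy /= exy.
have e : x = y by apply: funext.
by subst y; rewrite (Prop_irrelevance hx hy).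
Qed.

HB.instance Definition _ := gen_eqMixin R.
HB.instance Definition _ := gen_choiceMixin R.

Lemma bser_supp_le (x : R) : exists N, supp_le (bval x) N.
Proof. by case: (bval_bounded x) => N hN; exists N. Qed.

Lemma bser_supp_le2 (x y : R) : exists N, supp_le (bval x) N /\ supp_le (bval y) N.
Proof.
case: (bser_supp_le x) => N hN; case: (bser_supp_le y) => M hM.
exists (`|N|%N%:Z + `|M|%N%:Z).
by split; [apply: supp_le_mono hN | apply: supp_le_mono hM]; lia.
Qed.

Lemma sadd_bounded (a b : ser A) :
  bounded_above a -> bounded_above b -> bounded_above (sadd a b).
Proof.
case=> N ha; case=> M hb; exists (`|N|%N%:Z + `|M|%N%:Z) => p hp.
by rewrite /sadd ha ?hb ?addr0 //; lia.
Qed.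

Lemma sopp_bounded (a : ser A) : bounded_above a -> bounded_above (fun n => - a n).
Proof. by case=> N ha; exists N => p hp; rewrite ha ?oppr0. Qed.

Definition bzero : R := BSer (fun _ => 0) (@supp_le_bounded A _ 0 (fun _ _ => erefl)).
Definition badd (x y : R) : R := BSer _ (sadd_bounded (bval_bounded x) (bval_bounded y)).
Definition bopp (x : R) : R := BSer _ (sopp_bounded (bval_bounded x)).
Definition bmul (x y : R) : R := BSer _ (smul_bounded (bval x) (bval y)).
Definition bone : R := BSer _ (supp_le_bounded (@delta_supp_le A 0)).

Lemma baddA : associative badd.
Proof. by move=> x y z; apply: bser_eq => n /=; rewrite /sadd addrA. Qed.
Lemma baddC : commutative badd.
Proof. by move=> x y; apply: bser_eq => n /=; rewrite /sadd addrC. Qed.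
Lemma badd0 : left_id bzero badd.
Proof. by move=> x; apply: bser_eq => n /=; rewrite /sadd add0r. Qed.
Lemma baddN : left_inverse bzero bopp badd.
Proof. by move=> x; apply: bser_eq => n /=; rewrite /sadd addNr. Qed.

HB.instance Definition _ := GRing.isZmodule.Build R baddA baddC badd0 baddN.

Lemma bmulA : associative bmul.
Proof.
move=> x y z; apply: bser_eq => n /=.
case: (bser_supp_le2 x y) => N [hx hy]; case: (bser_supp_le2 y z) => M [_ hz].
symmetry; apply: (@smulA A _ _ _ (`|N|%N%:Z + `|M|%N%:Z));
  [apply: supp_le_mono hx | apply: supp_le_mono hy | apply: supp_le_mono hz]; lia.
Qed.

Lemma bmulC : commutative bmul.
Proof.
move=> x y; apply: bser_eq => n /=.
by case: (bser_supp_le2 x y) => N [hx hy]; apply: smulC hx hy n.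
Qed.

Lemma bmul1 : left_id bone bmul.
Proof.
move=> x; apply: bser_eq => n /=; case: (bser_supp_le x) => N hx.
by rewrite (smulC (@delta_supp_le A 0) hx) (@smul_delta A _ N 0 hx) subr0.
Qed.

Lemma bmulDl : left_distributive bmul badd.
Proof.
move=> x y z; apply: bser_eq => n /=.
case: (bser_supp_le2 x y) => N [hx hy]; case: (bser_supp_le z) => M hz.
exact: smulDl hx hy hz n.
Qed.

HB.instance Definition _ := GRing.Zmodule_isComPzRing.Build R bmulA bmulC bmul1 bmulDl.

Lemma bvalB (x y : R) n : bval (x - y) n = bval x n - bval y n. Proof. by []. Qed.
Lemma bvalM (x y : R) : bval (x * y) = smul (bval x) (bval y). Proof. by []. Qed.
Lemma bval1 : bval (1 : R) = delta 0. Proof. by []. Qed.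

Lemma det2_bval (a b c d : R) :
  det2 (bval a) (bval b) (bval c) (bval d) = bval (a * d - b * c).
Proof. by []. Qed.

Definition lam : R := BSer _ (supp_le_bounded (@delta_supp_le A 1)).

Lemma bval_lamX k : bval (lam ^+ k) = delta k.
Proof.
elim: k => [|k IHk] //; apply: funext => n.
rewrite exprSr bvalM IHk (smul_delta 1 (@delta_supp_le A k)) /delta.
by case: eqP => e1; case: eqP => e2 //; lia.
Qed.

Lemma sshift_lamX k (x : R) : sshift k (bval x) = bval (lam ^+ k * x).
Proof.
apply: funext => n; case: (bser_supp_le x) => N hx.
by rewrite bvalM bval_lamX (smulC (@delta_supp_le A k) hx) (smul_delta k hx).
Qed.

End BoundedSeriesRing.

Section Derivation.
Variables (R : pzRingType) (d : R -> R).
Hypothesis dD : {morph d : a b / a + b}.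
Hypothesis dM : forall a b, d (a * b) = d a * b + a * d b.

Lemma derivation0 : d 0 = 0.
Proof. by apply: (@addrI _ (d 0)); rewrite -dD !addr0. Qed.

Lemma derivationN a : d (- a) = - d a.
Proof. by apply: (@addrI _ (d a)); rewrite -dD !subrr derivation0. Qed.

Lemma derivationB a b : d (a - b) = d a - d b.
Proof. by rewrite dD derivationN. Qed.

Lemma derivation1 : d 1 = 0.
Proof.
have := dM 1 1; rewrite !mulr1 mul1r => h.
by apply: (@addrI _ (d 1)); rewrite addr0 -h.
Qed.

Lemma derivation_sum k (F : 'I_k -> R) : d (\sum_(i < k) F i) = \sum_(i < k) d (F i).
Proof. exact: (big_morph _ dD derivation0). Qed.

End Derivation.

Section SeriesDerivation.
Variables (A : comPzRingType) (d : A -> A).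
Hypothesis dD : {morph d : a b / a + b}.
Hypothesis dM : forall a b, d (a * b) = d a * b + a * d b.

Definition sder (s : ser A) : ser A := fun n => d (s n).

Lemma sder_supp_le s N : supp_le s N -> supp_le (sder s) N.
Proof. by move=> hs p hp; rewrite /sder hs ?derivation0. Qed.

Lemma sder_smul (a b : ser A) : bounded_above a -> bounded_above b ->
  forall n, d (smul a b n) = smul (sder a) b n + smul a (sder b) n.
Proof.
case=> N ha; case=> M hb n; set k := (`|(N + M - n)%R|%N).+1.
have hda := sder_supp_le ha; have hdb := sder_supp_le hb.
rewrite (smul_window (n := n) (lo := n - M) (k := k) ha hb); try lia.
rewrite (smul_window (n := n) (lo := n - M) (k := k) hda hb); try lia.
rewrite (smul_window (n := n) (lo := n - M) (k := k) ha hdb); try lia.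
by rewrite /window_sum derivation_sum // -big_split; apply: eq_bigr => i _; rewrite dM.
Qed.

Lemma sder_bounded s : bounded_above s -> bounded_above (sder s).
Proof. by case=> N hN; apply: supp_le_bounded (sder_supp_le hN). Qed.

Definition bder (x : bser A) : bser A := BSer _ (sder_bounded (bval_bounded x)).

Lemma bderD : {morph bder : x y / x + y}.
Proof. by move=> x y; apply: bser_eq => n /=; rewrite /sder /sadd dD. Qed.

Lemma bderM x y : bder (x * y) = bder x * y + x * bder y.
Proof. by apply: bser_eq => n /=; rewrite /sder /sadd sder_smul //; apply: bval_bounded. Qed.

Lemma bder_lamX k : bder (lam A ^+ k) = 0.
Proof.
apply: bser_eq => n; rewrite /= /sder bval_lamX /delta.
by case: ifP => _; rewrite ?derivation1 ?derivation0.
Qed.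

End SeriesDerivation.

Section VectorFieldCommutator.
Variables (R : comPzRingType) (d : hcoord -> R -> R).
Hypothesis dD : forall c, {morph d c : a b / a + b}.
Hypothesis dM : forall c a b, d c (a * b) = d c a * b + a * d c b.
Variables (L U W : hcoord -> R).
Hypothesis dL : forall c c', d c' (L c) = 0.

(* The field L_c d_c - U_c d_x - W_c d_y applied to a function whose
   differential is e. *)
Definition vfield c (e : hcoord -> R) := L c * e c - U c * e cx - W c * e cy.

Lemma vfield_commutator (e : hcoord -> R) :
    (forall c c', d c (e c') = d c' (e c)) -> forall c1 c2,
  vfield c1 (fun c => d c (vfield c2 e)) - vfield c2 (fun c => d c (vfield c1 e)) =
  - (vfield c1 (fun c => d c (U c2)) - vfield c2 (fun c => d c (U c1))) * e cx
  - (vfield c1 (fun c => d c (W c2)) - vfield c2 (fun c => d c (W c1))) * e cy.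
Proof.
move=> closed_e c1 c2.
rewrite /vfield !(derivationB (dD _)) !dM !dL.
rewrite (closed_e c2 c1) (closed_e cx c1) (closed_e cx c2).
rewrite (closed_e cy c1) (closed_e cy c2) (closed_e cy cx).
ring.
Qed.

End VectorFieldCommutator.

Lemma unimodular_system_eq0 (R : comPzRingType) (P Q a1 b1 a2 b2 : R) :
  a1 * b2 - b1 * a2 = 1 -> P * a1 + Q * b1 = 0 -> P * a2 + Q * b2 = 0 ->
  P = 0 /\ Q = 0.
Proof.
move=> det1 h1 h2; split.
  have -> : P = (P * a1 + Q * b1) * b2 - (P * a2 + Q * b2) * b1.
    by rewrite -[LHS]mulr1 -det1; ring.
  by rewrite h1 h2; ring.
have -> : Q = (P * a2 + Q * b2) * a1 - (P * a1 + Q * b1) * a2.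
  by rewrite -[LHS]mulr1 -det1; ring.
by rewrite h1 h2; ring.
Qed.

Section FlatPair.
Variables (R : comPzRingType) (d : hcoord -> R -> R).
Hypothesis dD : forall c, {morph d c : a b / a + b}.
Hypothesis dM : forall c a b, d c (a * b) = d c a * b + a * d c b.
Hypothesis dC : forall c c' a, d c (d c' a) = d c' (d c a).
Variables (L e1 e2 : hcoord -> R).
Hypothesis dL : forall c c', d c' (L c) = 0.
Hypothesis closed_e1 : forall c c', d c (e1 c') = d c' (e1 c).
Hypothesis closed_e2 : forall c c', d c (e2 c') = d c' (e2 c).

Definition jacobian a b := e1 a * e2 b - e1 b * e2 a.

Hypothesis jacobian_xy : jacobian cx cy = 1.

Definition flat_U c := L c * jacobian c cy.
Definition flat_W c := L c * jacobian cx c.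
Definition flat_field := vfield L flat_U flat_W.

Lemma flat_field_e1 c : flat_field c e1 = 0.
Proof.
rewrite /flat_field /vfield /flat_U /flat_W -[L c * e1 c]mulr1 -jacobian_xy /jacobian.
ring.
Qed.

Lemma flat_field_e2 c : flat_field c e2 = 0.
Proof.
rewrite /flat_field /vfield /flat_U /flat_W -[L c * e2 c]mulr1 -jacobian_xy /jacobian.
ring.
Qed.

Lemma flat_field_commute c1 c2 (u : R) :
  flat_field c1 (fun c => d c (flat_field c2 (fun c' => d c' u))) =
  flat_field c2 (fun c => d c (flat_field c1 (fun c' => d c' u))).
Proof.
have comm := vfield_commutator dD dM flat_U flat_W dL.
pose P := vfield L flat_U flat_W c1 (fun c => d c (flat_U c2))
        - vfield L flat_U flat_W c2 (fun c => d c (flat_U c1)).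
pose Q := vfield L flat_U flat_W c1 (fun c => d c (flat_W c2))
        - vfield L flat_U flat_W c2 (fun c => d c (flat_W c1)).
have kill e : (forall c c', d c (e c') = d c' (e c)) ->
    flat_field c1 e = 0 -> flat_field c2 e = 0 -> P * e cx + Q * e cy = 0.
  rewrite /flat_field => closed_e h1 h2; move: (comm e closed_e c1 c2).
  rewrite -/P -/Q h1 h2 /vfield !(derivation0 (dD _)) !mulr0 !subr0 => h.
  by apply: oppr_inj; rewrite oppr0 h; ring.
have [hP hQ] := unimodular_system_eq0 jacobian_xy
  (kill _ closed_e1 (flat_field_e1 c1) (flat_field_e1 c2))
  (kill _ closed_e2 (flat_field_e2 c1) (flat_field_e2 c2)).
apply/eqP; rewrite -subr_eq0; apply/eqP.
by rewrite /flat_field (comm _ (fun c c' => dC c c' u)) -/P -/Q hP hQ; ring.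
Qed.

End FlatPair.

Section DoubrovFerapontov.
Variables (A : comPzRingType) (D : hcoord -> A -> A) (X Y : A) (T Z g f : nat -> A).
Hypothesis HD : coord_diff_ring D X Y T Z.
Local Notation p1 := (phi1 Y Z g).
Local Notation p2 := (phi2 X T f).
Local Notation R := (bser A).

Let DD c : {morph D c : a b / a + b}. Proof. by move=> a b; case: HD. Qed.
Let DM c a b : D c (a * b) = D c a * b + a * D c b. Proof. by case: HD. Qed.
Let DC c c' a : D c (D c' a) = D c' (D c a). Proof. by case: HD. Qed.
Let Dcoord c c' : D c (coordval X Y T Z c') = if coord_eqb c c' then 1 else 0.
Proof. by case: HD. Qed.

Definition coord_degree (c : hcoord) : int :=
  match c with ct n => n%:Z | cz n => n%:Z | _ => 0 end.

Lemma phi1_der_supp_le c : supp_le (sD D c p1) (coord_degree c).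
Proof.
move=> p hp; have p_gt0 : 0 < p by case: c hp => /= *; lia.
rewrite /sD /phi1 ifF ?p_gt0; last by apply/eqP; lia.
rewrite (Dcoord c (cz _)); case: c hp {p_gt0} => //= j hp; case: eqP => //; lia.
Qed.

Lemma phi2_der_supp_le c : supp_le (sD D c p2) (coord_degree c).
Proof.
move=> p hp; have p_gt0 : 0 < p by case: c hp => /= *; lia.
rewrite /sD /phi2 ifF ?p_gt0; last by apply/eqP; lia.
rewrite (Dcoord c (ct _)); case: c hp {p_gt0} => //= j hp; case: eqP => //; lia.
Qed.

Arguments phi1_der_supp_le : clear implicits.
Arguments phi2_der_supp_le : clear implicits.

Definition grad1 c : R := BSer _ (supp_le_bounded (phi1_der_supp_le c)).
Definition grad2 c : R := BSer _ (supp_le_bounded (phi2_der_supp_le c)).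
Definition dR c : R -> R := bder (DD c).
Definition lam_eps c : R := lam A ^+ nz c.
Local Notation J := (jacobian grad1 grad2).

Let dRD c : {morph dR c : x y / x + y}. Proof. exact: bderD. Qed.
Let dRM c x y : dR c (x * y) = dR c x * y + x * dR c y. Proof. exact: (@bderM A (D c) (DD c) (DM c)). Qed.
Let dRC c c' x : dR c (dR c' x) = dR c' (dR c x).
Proof. by apply: bser_eq => n; rewrite /= /sder DC. Qed.
Let dR_lam_eps c c' : dR c' (lam_eps c) = 0. Proof. exact: bder_lamX. Qed.
Let grad1_closed c c' : dR c (grad1 c') = dR c' (grad1 c).
Proof. by apply: bser_eq => n; rewrite /= /sder /sD DC. Qed.
Let grad2_closed c c' : dR c (grad2 c') = dR c' (grad2 c).
Proof. by apply: bser_eq => n; rewrite /= /sder /sD DC. Qed.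

Hypothesis HF : DF_hierarchy D p1 p2.

Lemma jacobian_neg_coef a b n : valid_coord a -> valid_coord b -> n < 0 ->
  bval (lam A ^+ (nz a + nz b) * J a b) n = 0.
Proof. by move=> ha hb hn; have := HF ha hb n; rewrite /sneg hn -sshift_lamX. Qed.
Arguments jacobian_neg_coef : clear implicits.

Lemma jacobian_xy : J cx cy = 1.
Proof.
have s1x := phi1_der_supp_le cx; have s2x := phi2_der_supp_le cx.
have s1y := phi1_der_supp_le cy; have s2y := phi2_der_supp_le cy.
apply: bser_eq => n; rewrite bval1 /delta.
case: (ltrP n 0) => hn.
  have := jacobian_neg_coef cx cy n erefl erefl hn.
  by rewrite expr0 mul1r => ->; rewrite ifF //; apply/eqP; lia.
rewrite bvalB !bvalM; case: (eqVneq n 0) => [->|n_ne0].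
  rewrite -[0 in LHS]add0r !smul_top //= /sD /phi1 /phi2 /=.
  rewrite !(derivationN (DD _)) (Dcoord cx cx) (Dcoord cy cx) (Dcoord cx cy).
  by rewrite (Dcoord cy cy) /=; ring.
have n_gt0 : 0 + 0 < n by lia.
by rewrite (smul_supp_le s1x s2y n_gt0) (smul_supp_le s1y s2x n_gt0) subr0.
Qed.

Lemma lamD_grad1 c : lamD D c p1 = bval (lam_eps c * grad1 c).
Proof. exact: (sshift_lamX (nz c) (grad1 c)). Qed.

Lemma lamD_grad2 c : lamD D c p2 = bval (lam_eps c * grad2 c).
Proof. exact: (sshift_lamX (nz c) (grad2 c)). Qed.

Lemma VF_coef_x c : valid_coord c ->
  spos (det2 (lamD D c p1) (lamD D c p2) (sD D cy p1) (sD D cy p2)) = bval (lam_eps c * J c cy).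
Proof.
move=> hc; rewrite lamD_grad1 lamD_grad2 (det2_bval _ _ (grad1 cy) (grad2 cy)).
have -> : lam_eps c * grad1 c * grad2 cy - lam_eps c * grad2 c * grad1 cy = lam_eps c * J c cy.
  by rewrite /jacobian; ring.
by apply: spos_id => n /(jacobian_neg_coef c cy n hc erefl); rewrite addn0.
Qed.

Lemma VF_coef_y c : valid_coord c ->
  spos (det2 (lamD D c p2) (lamD D c p1) (sD D cx p2) (sD D cx p1)) = bval (lam_eps c * J cx c).
Proof.
move=> hc; rewrite lamD_grad1 lamD_grad2 (det2_bval _ _ (grad2 cx) (grad1 cx)).
have -> : lam_eps c * grad2 c * grad1 cx - lam_eps c * grad1 c * grad2 cx = lam_eps c * J cx c.
  by rewrite /jacobian; ring.
by apply: spos_id => n /(jacobian_neg_coef cx c n erefl hc).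
Qed.

Lemma VF_flat_field c s (G : hcoord -> R) : valid_coord c ->
    (forall c', bval (G c') = sD D c' s) ->
  VF D p1 p2 c s = bval (flat_field lam_eps grad1 grad2 c G).
Proof.
move=> hc hG; rewrite /VF VF_coef_x // VF_coef_y // /lamD -!hG sshift_lamX.
by apply: funext => n.
Qed.

Lemma VF_phi_eq0 c : valid_coord c -> forall k,
  VF D p1 p2 c p1 k = 0 /\ VF D p1 p2 c p2 k = 0.
Proof.
move=> hc k; rewrite (@VF_flat_field c p1 grad1) // (@VF_flat_field c p2 grad2) //.
by rewrite flat_field_e1 ?flat_field_e2 //; exact: jacobian_xy.
Qed.

Lemma VF_commute c1 c2 : valid_coord c1 -> valid_coord c2 ->
  vf_commute (VF D p1 p2 c1) (VF D p1 p2 c2).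
Proof.
move=> h1 h2 u hu k; pose v : R := BSer u hu.
pose F c := flat_field lam_eps grad1 grad2 c (dR^~ v).
have VF_u c : valid_coord c -> VF D p1 p2 c u = bval (F c).
  by move=> hc; apply: VF_flat_field.
have VF_F c c' : valid_coord c ->
    VF D p1 p2 c (bval (F c')) = bval (flat_field lam_eps grad1 grad2 c (dR^~ (F c'))).
  by move=> hc; apply: VF_flat_field.
transitivity (VF D p1 p2 c1 (bval (F c2)) k); first by rewrite -VF_u.
rewrite VF_F // (flat_field_commute dRD dRM dRC dR_lam_eps grad1_closed grad2_closed jacobian_xy).
by rewrite -VF_F // -VF_u.
Qed.

End DoubrovFerapontov.

Theorem mainTheorem2 (A : comPzRingType) (D : hcoord -> A -> A) (X Y : A)
    (T Z : nat -> A) (g f : nat -> A) :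
  coord_diff_ring D X Y T Z ->
  DF_hierarchy D (phi1 Y Z g) (phi2 X T f) ->
  let p1 := phi1 Y Z g in let p2 := phi2 X T f in
  [/\ (forall n : nat, (0 < n)%N -> forall k : int,
         Tvf D p1 p2 n p1 k = 0 /\ Tvf D p1 p2 n p2 k = 0),
      (forall j : nat, (0 < j)%N -> forall k : int,
         Zvf D p1 p2 j p1 k = 0 /\ Zvf D p1 p2 j p2 k = 0),
      (forall n s : nat, (0 < n)%N -> (0 < s)%N ->
         vf_commute (Tvf D p1 p2 n) (Tvf D p1 p2 s)),
      (forall n j : nat, (0 < n)%N -> (0 < j)%N ->
         vf_commute (Tvf D p1 p2 n) (Zvf D p1 p2 j)) &
      (forall i j : nat, (0 < i)%N -> (0 < j)%N ->
         vf_commute (Zvf D p1 p2 i) (Zvf D p1 p2 j))].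
Proof.
move=> HD HF p1 p2; split.
- by move=> n hn; apply: (VF_phi_eq0 HD HF (c := ct n)).
- by move=> j hj; apply: (VF_phi_eq0 HD HF (c := cz j)).
- by move=> n s hn hs; apply: (VF_commute HD HF (c1 := ct n) (c2 := ct s)).
- by move=> n j hn hj; apply: (VF_commute HD HF (c1 := ct n) (c2 := cz j)).
- by move=> i j hi hj; apply: (VF_commute HD HF (c1 := cz i) (c2 := cz j)).
Qed.
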